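(* If the set of all Diophantine equations which have a solution in non-negative integers is not recursive, then the set of all Diophantine equations which have at most finitely many solutions in non-negative integers is not recursively enumerable.
   Context: A Diophantine equation is an equation $D(x_1,\ldots,x_n)=0$ with $D\in\mathbb Z[x_1,\ldots,x_n]$; such equations are coded as natural numbers so that recursiveness and recursive enumerability of sets of them make sense. Solutions in non-negative integers are tuples in $\mathbb N^n$, $\mathbb N=\{0,1,2,\ldots\}$. *)

From Stdlib Require Import Arith ZArith List Cantor.
Import ListNotations.

(* Arguments are passed as a list of naturals; missing arguments read as 0
   (a standard, harmless convention: it yields exactly the partial recursive
   functions). *)
Inductive code : Type :=
| c_zero : code
| c_succ : code
| c_proj : nat -> code
| c_comp : code -> list code -> code
| c_prec : code -> code -> code
| c_mu   : code -> code.

Inductive eval : code -> list nat -> nat -> Prop :=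
| e_zero l : eval c_zero l 0
| e_succ l : eval c_succ l (S (hd 0 l))
| e_proj i l : eval (c_proj i) l (nth i l 0)
| e_comp f gs l ys z :
    Forall2 (fun g y => eval g l y) gs ys -> eval f ys z ->
    eval (c_comp f gs) l z
| e_prec0 f g l z : eval f l z -> eval (c_prec f g) (0 :: l) z
| e_precS f g n l r z :
    eval (c_prec f g) (n :: l) r -> eval g (n :: r :: l) z ->
    eval (c_prec f g) (S n :: l) z
| e_prec_nil f g z : eval (c_prec f g) [0] z -> eval (c_prec f g) [] z
| e_mu f l y :
    eval f (y :: l) 0 ->
    (forall y', y' < y -> exists v, v <> 0 /\ eval f (y' :: l) v) ->
    eval (c_mu f) l y.

Definition recursive (P : nat -> Prop) : Prop :=
  exists c : code, forall n,
    (P n -> eval c [n] 1) /\ (~ P n -> eval c [n] 0).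

Definition recursively_enumerable (P : nat -> Prop) : Prop :=
  exists c : code, forall n, P n <-> exists y, eval c [n] y.

(* D(x_1,...,x_n) = sum of monomials  a * x_1^e_1 * ... * x_n^e_n.
   A monomial is (a, [e_1; ...; e_k]); missing exponents are 0 and exponents
   beyond position n are ignored. *)
Record dioph_eq : Type := mkDioph {
  nvars : nat;
  monos : list (Z * list nat)
}.

Fixpoint mono_val (e : list nat) (x : list nat) : Z :=
  match x with
  | [] => 1%Z
  | xi :: x' => Z.mul (Z.pow (Z.of_nat xi) (Z.of_nat (hd 0%nat e))) (mono_val (tl e) x')
  end.

(* Value of D at x (x is meant to have length nvars D). *)
Definition poly_val (D : dioph_eq) (x : list nat) : Z :=
  fold_right (fun m acc => (fst m * mono_val (snd m) x + acc)%Z) 0%Z (monos D).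

Definition is_solution (D : dioph_eq) (x : list nat) : Prop :=
  length x = nvars D /\ poly_val D x = 0%Z.

Definition has_solution (D : dioph_eq) : Prop :=
  exists x, is_solution D x.

Definition finitely_many_solutions (D : dioph_eq) : Prop :=
  exists L : list (list nat), forall x, is_solution D x -> In x L.

(* Goedel numbering: a (surjective, evidently computable) decoding of naturals
   into Diophantine equations, built from the Cantor pairing function. *)
Fixpoint decode_list_aux (len r : nat) : list nat :=
  match len with
  | 0 => []
  | S len' => let (a, r') := Cantor.of_nat r in a :: decode_list_aux len' r'
  end.

Definition decode_list (c : nat) : list nat :=
  let (len, r) := Cantor.of_nat c in decode_list_aux len r.

Definition decode_Z (c : nat) : Z :=
  let (s, m) := Cantor.of_nat c in
  match s with 0 => Z.of_nat m | _ => (- Z.of_nat m)%Z end.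

Definition decode_mono (c : nat) : Z * list nat :=
  let (a, b) := Cantor.of_nat c in (decode_Z a, decode_list b).

Definition decode_eq (c : nat) : dioph_eq :=
  let (n, r) := Cantor.of_nat c in mkDioph n (map decode_mono (decode_list r)).

(* Solvability of Diophantine equations is recursively enumerable (search for a
   solution), and a set is recursive as soon as both it and its complement are
   (Post: run both semi-deciders with increasing fuel).  Adding a variable that
   occurs nowhere is a computable transformation of equations which sends an
   unsolvable equation to an unsolvable one and a solvable one to an equation
   with infinitely many solutions.  So if the equations with finitely many
   solutions formed an r.e. set, so would the unsolvable ones, and solvability
   would be recursive.  Post's argument needs a fuelled evaluator of codes that
   is itself computable: each code is compiled into a code computing its
   fuelled evaluation. *)

From Stdlib Require Import Arith ZArith List Cantor Lia Classical.
Import ListNotations.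

Notation prim_rec a f n := (nat_rect (fun _ => nat) a f n).

Lemma prim_rec_ext (a a' : nat) f g n : a = a' -> (forall j r, f j r = g j r) ->
  prim_rec a f n = prim_rec a' g n.
Proof. intros -> H. induction n; simpl; congruence. Qed.

Definition agree (k : nat) (l l' : list nat) : Prop :=
  forall i, i < k -> nth i l 0 = nth i l' 0.

Lemma agree_weaken k k' l l' : k' <= k -> agree k l l' -> agree k' l l'.
Proof. intros H A i Hi. apply A. lia. Qed.

Lemma agree_sym k l l' : agree k l l' -> agree k l' l.
Proof. intros A i Hi. symmetry. auto. Qed.

Lemma agree_cons k a l l' : agree (k - 1) l l' -> agree k (a :: l) (a :: l').
Proof. intros A [|i] Hi; simpl; auto. apply A. lia. Qed.

Lemma agree_cons2 k a b l l' : agree (k - 2) l l' -> agree k (a :: b :: l) (a :: b :: l').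
Proof. intros A. do 2 apply agree_cons. eapply agree_weaken; [|exact A]. lia. Qed.

Lemma agree_hd k l l' : agree (S k) l l' -> hd 0 l = hd 0 l'.
Proof. intros A. specialize (A 0 ltac:(lia)). destruct l, l'; simpl in *; auto. Qed.

Lemma agree_tl k l l' : agree (S k) l l' -> agree k (tl l) (tl l').
Proof.
  intros A i Hi. specialize (A (S i) ltac:(lia)).
  destruct l, l'; simpl in *; auto; destruct i; auto.
Qed.

Definition computes (c : code) (F : list nat -> nat) : Prop := forall l, eval c l (F l).

Lemma eval_comp1 f g l a z : eval g l a -> eval f [a] z -> eval (c_comp f [g]) l z.
Proof. intros. econstructor; eauto. Qed.

Lemma eval_comp2 f g1 g2 l a b z :
  eval g1 l a -> eval g2 l b -> eval f [a; b] z -> eval (c_comp f [g1; g2]) l z.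
Proof. intros. econstructor; eauto. Qed.

Lemma eval_comp3 f g1 g2 g3 l a b c z :
  eval g1 l a -> eval g2 l b -> eval g3 l c -> eval f [a; b; c] z ->
  eval (c_comp f [g1; g2; g3]) l z.
Proof. intros. econstructor; eauto. Qed.

Lemma eval_prec f g a (G : nat -> nat -> nat) n l :
  eval f l a -> (forall j r, eval g (j :: r :: l) (G j r)) ->
  eval (c_prec f g) (n :: l) (prim_rec a G n).
Proof.
  intros Hf Hg. induction n; simpl.
  - constructor. auto.
  - eapply e_precS; eauto.
Qed.

Lemma computes_prec f g F :
  (forall x l, eval (c_prec f g) (x :: l) (F (x :: l))) -> F [] = F [0] ->
  computes (c_prec f g) F.
Proof. intros H H0 [|x l]; [rewrite H0; apply e_prec_nil|]; apply H. Qed.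

Lemma eval_succ x : eval c_succ [x] (S x).
Proof. exact (e_succ [x]). Qed.

Lemma eval_proj i l v : nth i l 0 = v -> eval (c_proj i) l v.
Proof. intros <-. constructor. Qed.

Definition code_add := c_prec (c_proj 0) (c_comp c_succ [c_proj 1]).

Lemma computes_add : computes code_add (fun l => nth 0 l 0 + nth 1 l 0).
Proof.
  apply computes_prec; [|reflexivity]. intros x l. simpl.
  replace (x + nth 0 l 0) with (prim_rec (nth 0 l 0) (fun _ r => S r) x)
    by (induction x; simpl; auto).
  apply eval_prec; [constructor|]. intros j r.
  apply eval_comp1 with r; [constructor | apply eval_succ].
Qed.

Definition code_mul := c_prec c_zero (c_comp code_add [c_proj 1; c_proj 2]).

Lemma computes_mul : computes code_mul (fun l => nth 0 l 0 * nth 1 l 0).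
Proof.
  apply computes_prec; [|reflexivity]. intros x l. simpl.
  replace (x * nth 0 l 0) with (prim_rec 0 (fun _ r => r + nth 0 l 0) x)
    by (induction x; simpl; lia).
  apply eval_prec; [constructor|]. intros j r.
  apply eval_comp2 with r (nth 0 l 0); [constructor | apply eval_proj; reflexivity |].
  apply (computes_add [r; nth 0 l 0]).
Qed.

Definition code_pred := c_prec c_zero (c_proj 0).

Lemma computes_pred : computes code_pred (fun l => pred (nth 0 l 0)).
Proof.
  apply computes_prec; [|reflexivity]. intros x l. simpl.
  replace (pred x) with (prim_rec 0 (fun j _ => j) x) by (destruct x; reflexivity).
  apply eval_prec; constructor.
Qed.

Definition code_sub :=
  c_comp (c_prec (c_proj 0) (c_comp code_pred [c_proj 1])) [c_proj 1; c_proj 0].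

Lemma computes_sub : computes code_sub (fun l => nth 0 l 0 - nth 1 l 0).
Proof.
  intros l. apply eval_comp2 with (nth 1 l 0) (nth 0 l 0); try constructor.
  replace (nth 0 l 0 - nth 1 l 0) with (prim_rec (nth 0 l 0) (fun _ r => pred r) (nth 1 l 0)).
  - apply eval_prec; [apply eval_proj; reflexivity|]. intros j r.
    apply eval_comp1 with r; [constructor | apply (computes_pred [r])].
  - induction (nth 1 l 0); simpl; lia.
Qed.

(** * An expression language compiled to codes *)

Inductive expr : Type :=
| Var : nat -> expr
| Zro : expr
| Suc : expr -> expr
| Add : expr -> expr -> expr
| Mul : expr -> expr -> expr
| Sub : expr -> expr -> expr
| Rec : expr -> expr -> expr -> expr
| App : expr -> exprs -> expr
with exprs : Type := ENil : exprs | ECons : expr -> exprs -> exprs.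

Scheme expr_mut := Induction for expr Sort Prop
with exprs_mut := Induction for exprs Sort Prop.
Combined Scheme expr_exprs_mut from expr_mut, exprs_mut.

Fixpoint expr_val (e : expr) (l : list nat) {struct e} : nat :=
  match e with
  | Var i => nth i l 0
  | Zro => 0
  | Suc a => S (expr_val a l)
  | Add a b => expr_val a l + expr_val b l
  | Mul a b => expr_val a l * expr_val b l
  | Sub a b => expr_val a l - expr_val b l
  | Rec b i s => prim_rec (expr_val i l) (fun j r => expr_val s (j :: r :: l)) (expr_val b l)
  | App f es => expr_val f (exprs_val es l)
  end
with exprs_val (es : exprs) (l : list nat) {struct es} : list nat :=
  match es with ENil => [] | ECons e es => expr_val e l :: exprs_val es l end.

Fixpoint expr_width (e : expr) : nat :=
  match e with
  | Var i => S i
  | Zro => 0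
  | Suc a => expr_width a
  | Add a b | Mul a b | Sub a b => max (expr_width a) (expr_width b)
  | Rec b i s => max (expr_width b) (max (expr_width i) (expr_width s - 2))
  | App f es => exprs_width es
  end
with exprs_width (es : exprs) : nat :=
  match es with ENil => 0 | ECons e es => max (expr_width e) (exprs_width es) end.

Lemma expr_val_agree_all :
  (forall e l l', agree (expr_width e) l l' -> expr_val e l = expr_val e l') /\
  (forall es l l', agree (exprs_width es) l l' -> exprs_val es l = exprs_val es l').
Proof.
  apply expr_exprs_mut; simpl; intros;
    repeat match goal with
    | H : forall l l', agree _ l l' -> _ = _ |- _ =>
        rewrite (H l l') by (eapply agree_weaken; [|eassumption]; lia); clear H
    end; auto.
  apply prim_rec_ext; auto. intros. apply H1, agree_cons2.
  eapply agree_weaken; [|eassumption]. lia.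
Qed.

Lemma expr_val_agree e l l' : agree (expr_width e) l l' -> expr_val e l = expr_val e l'.
Proof. apply expr_val_agree_all. Qed.

Definition window (k W : nat) (l : list nat) : list nat :=
  map (fun i => nth (i + k) l 0) (seq 0 W).

Definition proj_codes (k W : nat) : list code := map (fun i => c_proj (i + k)) (seq 0 W).

Lemma eval_proj_codes k W l :
  Forall2 (fun g y => eval g l y) (proj_codes k W) (window k W l).
Proof.
  unfold proj_codes, window. induction (seq 0 W); simpl; constructor; auto. constructor.
Qed.

Lemma nth_window k W l i : i < W -> nth i (window k W l) 0 = nth (i + k) l 0.
Proof.
  intros Hi. unfold window.
  rewrite nth_indep with (d' := (fun i => nth (i + k) l 0) 0) by (rewrite length_map, length_seq; lia).
  rewrite (map_nth (fun i => nth (i + k) l 0)), seq_nth by lia. reflexivity.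
Qed.

Lemma agree_window k W l l' :
  (forall i, i < W -> nth (i + k) l 0 = nth i l' 0) -> agree W (window k W l) l'.
Proof. intros H i Hi. rewrite nth_window by lia. auto. Qed.

Fixpoint compile (e : expr) : code :=
  match e with
  | Var i => c_proj i
  | Zro => c_zero
  | Suc a => c_comp c_succ [compile a]
  | Add a b => c_comp code_add [compile a; compile b]
  | Mul a b => c_comp code_mul [compile a; compile b]
  | Sub a b => c_comp code_sub [compile a; compile b]
  | Rec b i s =>
      c_comp (c_prec (compile i) (compile s))
             (compile b :: proj_codes 0 (max (expr_width i) (expr_width s - 2)))
  | App f es => c_comp (compile f) (compile_list es)
  end
with compile_list (es : exprs) : list code :=
  match es with ENil => [] | ECons e es => compile e :: compile_list es end.

Lemma compile_correct_all :
  (forall e, computes (compile e) (expr_val e)) /\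
  (forall es l, Forall2 (fun g y => eval g l y) (compile_list es) (exprs_val es l)).
Proof.
  apply expr_exprs_mut; unfold computes; simpl; intros.
  - constructor.
  - constructor.
  - apply eval_comp1 with (expr_val e l); auto. apply eval_succ.
  - apply eval_comp2 with (expr_val e l) (expr_val e0 l); auto. apply computes_add.
  - apply eval_comp2 with (expr_val e l) (expr_val e0 l); auto. apply computes_mul.
  - apply eval_comp2 with (expr_val e l) (expr_val e0 l); auto. apply computes_sub.
  - econstructor; [constructor; [apply H | apply eval_proj_codes]|].
    set (W := max (expr_width e0) (expr_width e1 - 2)).
    assert (A : agree W l (window 0 W l))
      by (apply agree_sym, agree_window; intros; rewrite Nat.add_0_r; reflexivity).
    erewrite prim_rec_ext; [apply eval_prec; [apply H0 | intros; apply H1]| |].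
    + apply expr_val_agree. eapply agree_weaken; [|exact A]. unfold W; lia.
    + intros. apply expr_val_agree, agree_cons2. eapply agree_weaken; [|exact A]. unfold W; lia.
  - econstructor; eauto.
  - constructor.
  - constructor; auto.
Qed.

Lemma compile_correct e : computes (compile e) (expr_val e).
Proof. apply compile_correct_all. Qed.

(** * Evaluation with fuel *)

Fixpoint code_nested_ind (P : code -> Prop) (Hz : P c_zero) (Hs : P c_succ)
  (Hp : forall i, P (c_proj i))
  (Hc : forall f gs, P f -> Forall P gs -> P (c_comp f gs))
  (Hr : forall f g, P f -> P g -> P (c_prec f g)) (Hm : forall f, P f -> P (c_mu f))
  (c : code) {struct c} : P c :=
  let IH := code_nested_ind P Hz Hs Hp Hc Hr Hm in
  match c with
  | c_zero => Hz
  | c_succ => Hs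
  | c_proj i => Hp i
  | c_comp f gs => Hc f gs (IH f)
      ((fix F (gs : list code) : Forall P gs :=
          match gs with [] => Forall_nil P | g :: gs' => Forall_cons g (IH g) (F gs') end) gs)
  | c_prec f g => Hr f g (IH f) (IH g)
  | c_mu f => Hm f (IH f)
  end.

Definition encode_opt (o : option nat) : nat := match o with Some v => S v | None => 0 end.

(* The state of a bounded search: [0] while searching, [1] once an undefined
   value was met, [S (S y)] once [y] was found.  The tested values [t j] are
   encoded by [encode_opt]. *)
Definition mu_step (j st t : nat) : nat :=
  match st with 0 => match t with 0 => 1 | 1 => S (S j) | _ => 0 end | _ => st end.

Definition mu_search (t : nat -> nat) (n : nat) : nat :=
  prim_rec 0 (fun j st => mu_step j st (t j)) n.

Definition mu_result (st : nat) : option nat :=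
  match st with S (S v) => Some v | _ => None end.

Fixpoint all_some (os : list (option nat)) : option (list nat) :=
  match os with
  | [] => Some []
  | o :: os' =>
      match o, all_some os' with Some v, Some vs => Some (v :: vs) | _, _ => None end
  end.

(* Every search of a [c_mu] is cut off after [s] candidates. *)
Fixpoint eval_fuel (s : nat) (c : code) (l : list nat) {struct c} : option nat :=
  match c with
  | c_zero => Some 0
  | c_succ => Some (S (hd 0 l))
  | c_proj i => Some (nth i l 0)
  | c_comp f gs =>
      match all_some (map (fun g => eval_fuel s g l) gs) with
      | Some ys => eval_fuel s f ys
      | None => None
      end
  | c_prec f g =>
      nat_rect (fun _ => option nat) (eval_fuel s f (tl l))
        (fun j r => match r with Some r => eval_fuel s g (j :: r :: tl l) | None => None end)
        (hd 0 l)
  | c_mu f => mu_result (mu_search (fun j => encode_opt (eval_fuel s f (j :: l))) s)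
  end.

(* A code reads only its first [code_width c] arguments, so [fuel_code] below
   can forward them explicitly inside primitive recursions. *)
Fixpoint code_width (c : code) : nat :=
  match c with
  | c_zero => 0
  | c_succ => 1
  | c_proj i => S i
  | c_comp f gs => fold_right max 0 (map code_width gs)
  | c_prec f g => S (max (code_width f) (code_width g - 2))
  | c_mu f => code_width f - 1
  end.

Lemma mu_search_ext t t' n :
  (forall j, j < n -> t j = t' j) -> mu_search t n = mu_search t' n.
Proof.
  intros H. unfold mu_search. induction n; simpl; auto.
  rewrite IHn by (intros; apply H; lia). rewrite H by lia. reflexivity.
Qed.

Lemma eval_fuel_agree c s l l' :
  agree (code_width c) l l' -> eval_fuel s c l = eval_fuel s c l'.
Proof.
  revert s l l'. induction c using code_nested_ind; intros s l l' A; simpl in *.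
  - reflexivity.
  - f_equal. f_equal. apply (agree_hd 0). auto.
  - f_equal. apply A. lia.
  - assert (E : map (fun g => eval_fuel s g l) gs = map (fun g => eval_fuel s g l') gs).
    { clear IHc. induction H; simpl in *; auto. f_equal.
      - apply H. eapply agree_weaken; [|eassumption]. lia.
      - apply IHForall. eapply agree_weaken; [|eassumption]. lia. }
    rewrite E. reflexivity.
  - rewrite (agree_hd _ _ _ A). apply agree_tl in A.
    induction (hd 0 l'); simpl.
    + apply IHc1. eapply agree_weaken; [|eassumption]. lia.
    + rewrite IHn. destruct (nat_rect _ (eval_fuel s c1 (tl l')) _ n); auto.
      apply IHc2, agree_cons2. eapply agree_weaken; [|eassumption]. lia.
  - f_equal. apply mu_search_ext. intros. f_equal. apply IHc, agree_cons. auto.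
Qed.

Lemma mu_search_spec t n :
  (mu_search t n = 0 -> forall y, y < n -> t y >= 2) /\
  (forall v, mu_search t n = S (S v) -> t v = 1 /\ forall y, y < v -> t y >= 2).
Proof.
  unfold mu_search. induction n as [|n [IH1 IH2]]; simpl.
  - split; intros; [lia | discriminate].
  - destruct (nat_rect _ 0 _ n) as [|st].
    + specialize (IH1 eq_refl). unfold mu_step.
      destruct (t n) as [|[|w]] eqn:Et; split; intros; try discriminate.
      * injection H as <-. auto.
      * assert (y < n \/ y = n) as [|] by lia; [auto | subst; lia].
    + split; intros; [discriminate | auto].
Qed.

Lemma mu_search_undefined t y :
  (forall j, j < y -> t j >= 2) -> mu_search t y = 0.
Proof.
  unfold mu_search. induction y; intros H; simpl; auto.
  rewrite IHy by (intros; apply H; lia).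
  unfold mu_step. specialize (H y ltac:(lia)). destruct (t y) as [|[|]]; lia.
Qed.

Lemma mu_search_found t y k :
  (forall j, j < y -> t j >= 2) -> t y = 1 -> mu_search t (S y + k) = S (S y).
Proof.
  intros H1 H2. induction k.
  - rewrite Nat.add_0_r. unfold mu_search. simpl. fold (mu_search t y).
    rewrite mu_search_undefined, H2 by auto. reflexivity.
  - rewrite Nat.add_succ_r.
    change (mu_step (S y + k) (mu_search t (S y + k)) (t (S y + k)) = S (S y)).
    rewrite IHk. reflexivity.
Qed.

Lemma all_some_sound s l gs ys :
  Forall (fun g => forall s l v, eval_fuel s g l = Some v -> eval g l v) gs ->
  all_some (map (fun g => eval_fuel s g l) gs) = Some ys ->
  Forall2 (fun g y => eval g l y) gs ys.
Proof.
  intros H. revert ys. induction H; simpl; intros ys E.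
  - injection E as <-. constructor.
  - destruct (eval_fuel s x l) eqn:E1; [|discriminate].
    destruct (all_some _); [|discriminate]. injection E as <-. constructor; eauto.
Qed.

Lemma eval_fuel_sound c s l v : eval_fuel s c l = Some v -> eval c l v.
Proof.
  revert s l v. induction c using code_nested_ind; intros s l v E; simpl in E.
  - injection E as <-. constructor.
  - injection E as <-. constructor.
  - injection E as <-. constructor.
  - destruct (all_some _) eqn:E1; [|discriminate].
    econstructor; [eapply all_some_sound|]; eauto.
  - assert (G : forall n r,
       nat_rect (fun _ => option nat) (eval_fuel s c1 (tl l))
         (fun j r => match r with Some r => eval_fuel s c2 (j :: r :: tl l) | None => None end)
         n = Some r ->
       eval (c_prec c1 c2) (n :: tl l) r).
    { induction n; simpl; intros r H.
      - constructor. eauto.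
      - destruct (nat_rect _ _ _ n) eqn:E2; [|discriminate].
        econstructor; eauto. }
    destruct l as [|x l]; simpl in *; [apply e_prec_nil|]; auto.
  - unfold mu_result in E.
    destruct (mu_search _ s) as [|[|v']] eqn:E1; try discriminate. injection E as E; subst v'.
    destruct (proj2 (mu_search_spec _ s) _ E1) as [H3 H4].
    constructor.
    + destruct (eval_fuel s c (v :: l)) as [[|w]|] eqn:E3; simpl in H3; try discriminate. eauto.
    + intros y Hy. specialize (H4 y Hy).
      destruct (eval_fuel s c (y :: l)) as [[|w]|] eqn:E3; simpl in H4; try lia.
      exists (S w). split; [lia | eauto].
Qed.

Lemma eventually_forall_lt (P : nat -> nat -> Prop) y :
  (forall y', y' < y -> exists s0, forall s, s0 <= s -> P s y') ->
  exists s0, forall s, s0 <= s -> forall y', y' < y -> P s y'.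
Proof.
  induction y; intros H.
  - exists 0. intros; lia.
  - destruct IHy as [s1 H1]; [intros; apply H; lia|].
    destruct (H y ltac:(lia)) as [s2 H2].
    exists (max s1 s2). intros s Hs y' Hy.
    assert (y' < y \/ y' = y) as [|] by lia; [apply H1 | subst; apply H2]; lia || auto.
Qed.

Lemma all_some_complete l gs ys :
  Forall2 (fun g y => exists s0, forall s, s0 <= s -> eval_fuel s g l = Some y) gs ys ->
  exists s0, forall s, s0 <= s -> all_some (map (fun g => eval_fuel s g l) gs) = Some ys.
Proof.
  induction 1.
  - exists 0. reflexivity.
  - destruct H as [s1 H1], IHForall2 as [s2 H2]. exists (max s1 s2). intros s Hs.
    simpl. rewrite H1, H2 by lia. reflexivity.
Qed.

Lemma eval_fuel_complete c l v :
  eval c l v -> exists s0, forall s, s0 <= s -> eval_fuel s c l = Some v.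
Proof.
  revert c l v. fix IH 4. intros c l v H. destruct H.
  - exists 0; reflexivity.
  - exists 0; reflexivity.
  - exists 0; reflexivity.
  - assert (A : Forall2 (fun g y => exists s0, forall s, s0 <= s -> eval_fuel s g l = Some y) gs ys).
    { clear H0. induction H; constructor; [apply IH|]; assumption. }
    destruct (all_some_complete _ _ _ A) as [s1 H1], (IH _ _ _ H0) as [s2 H2].
    exists (max s1 s2). intros s Hs. simpl. rewrite H1 by lia. apply H2. lia.
  - destruct (IH _ _ _ H) as [s1 H1]. exists s1. intros. simpl. auto.
  - destruct (IH _ _ _ H) as [s1 H1], (IH _ _ _ H0) as [s2 H2].
    exists (max s1 s2). intros s Hs. simpl. specialize (H1 s ltac:(lia)). simpl in H1.
    rewrite H1. apply H2. lia.
  - destruct (IH _ _ _ H) as [s1 H1]. exists s1. exact H1.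
  - assert (A : forall y', y' < y -> exists s0, forall s, s0 <= s ->
                  exists w, w <> 0 /\ eval_fuel s f (y' :: l) = Some w).
    { intros y' Hy. destruct (H0 y' Hy) as [w [Hw Hev]].
      destruct (IH _ _ _ Hev) as [s0 Hs0]. exists s0. eauto. }
    destruct (eventually_forall_lt _ _ A) as [s1 H1], (IH _ _ _ H) as [s2 H2].
    exists (max (max s1 s2) (S y)). intros s Hs.
    change (mu_result (mu_search (fun j => encode_opt (eval_fuel s f (j :: l))) s) = Some y).
    set (t := fun j => encode_opt (eval_fuel s f (j :: l))).
    replace (mu_search t s) with (mu_search t (S y + (s - S y))) by (f_equal; lia).
    rewrite mu_search_found; [reflexivity| |]; unfold t.
    + intros j Hj. destruct (H1 s ltac:(lia) j Hj) as [w [Hw ->]]. simpl. lia.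
    + rewrite H2 by lia. reflexivity.
Qed.

Lemma eval_det c l v v' : eval c l v -> eval c l v' -> v = v'.
Proof.
  intros H H'.
  destruct (eval_fuel_complete _ _ _ H) as [s1 H1], (eval_fuel_complete _ _ _ H') as [s2 H2].
  specialize (H1 (max s1 s2) ltac:(lia)). specialize (H2 (max s1 s2) ltac:(lia)). congruence.
Qed.

(** * Evaluation with fuel is primitive recursive *)

Definition one := Suc Zro.
Definition is_zero (e : expr) := Sub one e.
Definition sgn (e : expr) := Sub one (is_zero e).
Definition sg (x : nat) := 1 - (1 - x).

Definition code_is_zero := compile (is_zero (Var 0)).
Definition code_sg := compile (sgn (Var 0)).

Lemma eval_is_zero x : eval code_is_zero [x] (1 - x).
Proof. apply (compile_correct (is_zero (Var 0)) [x]). Qed.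

Lemma eval_sg x : eval code_sg [x] (sg x).
Proof. apply (compile_correct (sgn (Var 0)) [x]). Qed.

Lemma eval_mul a b : eval code_mul [a; b] (a * b).
Proof. apply (computes_mul [a; b]). Qed.

Lemma eval_pred a : eval code_pred [a] (pred a).
Proof. apply (computes_pred [a]). Qed.

Definition mu_step_e :=
  Add (Mul (is_zero (Var 1))
           (Add (is_zero (Var 2))
                (Mul (is_zero (Sub (Var 2) one)) (Mul (sgn (Var 2)) (Suc (Suc (Var 0)))))))
      (Var 1).

Definition code_mu_step := compile mu_step_e.

Lemma eval_mu_step j st t : eval code_mu_step [j; st; t] (mu_step j st t).
Proof.
  replace (mu_step j st t) with (expr_val mu_step_e [j; st; t])
    by (unfold mu_step; simpl; destruct st; [destruct t as [|[|t]]|]; simpl; lia).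
  apply compile_correct.
Qed.

Fixpoint mul_sg (cs : list code) (base : code) : code :=
  match cs with
  | [] => base
  | c :: cs' => c_comp code_mul [c_comp code_sg [c]; mul_sg cs' base]
  end.

(* The fuel is threaded through as the first argument of every subcode, and
   [sg]-factors force the result [0] (undefined) as soon as an intermediate
   value is undefined. *)
Fixpoint fuel_code (c : code) : code :=
  match c with
  | c_zero => c_comp c_succ [c_zero]
  | c_succ => c_comp c_succ [c_comp c_succ [c_proj 1]]
  | c_proj i => c_comp c_succ [c_proj (S i)]
  | c_comp f gs =>
      let cgs := map fuel_code gs in
      mul_sg cgs (c_comp (fuel_code f) (c_proj 0 :: map (fun cg => c_comp code_pred [cg]) cgs))
  | c_prec f g =>
      let W := max (code_width f) (code_width g - 2) in
      c_comp (c_prec (fuel_code f)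
        (c_comp code_mul [c_comp code_sg [c_proj 1];
                          c_comp (fuel_code g)
                            (c_proj 2 :: c_proj 0 :: c_comp code_pred [c_proj 1] :: proj_codes 3 W)]))
       (c_proj 1 :: c_proj 0 :: proj_codes 2 W)
  | c_mu f =>
      let W := code_width f - 1 in
      c_comp code_pred [c_comp (c_prec c_zero
        (c_comp code_mu_step
           [c_proj 0; c_proj 1; c_comp (fuel_code f) (c_proj 2 :: c_proj 0 :: proj_codes 3 W)]))
        (c_proj 0 :: c_proj 0 :: proj_codes 1 W)]
  end.

Definition fuel_correct (c : code) : Prop :=
  forall s l, eval (fuel_code c) (s :: l) (encode_opt (eval_fuel s c l)).

Definition all_defined (os : list (option nat)) : nat :=
  fold_right (fun o acc => sg (encode_opt o) * acc) 1 os.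

Lemma all_some_Some os ys :
  all_some os = Some ys -> map (fun o => pred (encode_opt o)) os = ys /\ all_defined os = 1.
Proof.
  revert ys; induction os as [|o os IH]; simpl; intros ys E.
  - injection E as <-. auto.
  - destruct o as [v|]; [|discriminate]. destruct (all_some os) as [vs|]; [|discriminate].
    injection E as <-. destruct (IH vs eq_refl) as [-> ->]. auto.
Qed.

Lemma all_some_None os : all_some os = None -> all_defined os = 0.
Proof.
  induction os as [|o os IH]; simpl; intros E; [discriminate|].
  destruct o as [v|]; simpl; [|reflexivity].
  destruct (all_some os); [discriminate|]. rewrite IH by auto. lia.
Qed.

Lemma eval_mul_sg gs s l base bv :
  Forall fuel_correct gs -> eval base (s :: l) bv ->
  eval (mul_sg (map fuel_code gs) base) (s :: l)
       (all_defined (map (fun g => eval_fuel s g l) gs) * bv).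
Proof.
  intros H Hb. induction H; simpl; [rewrite Nat.add_0_r; exact Hb|].
  rewrite <- Nat.mul_assoc.
  apply eval_comp2 with (sg (encode_opt (eval_fuel s x l)))
                        (all_defined (map (fun g => eval_fuel s g l) l0) * bv); auto.
  - apply eval_comp1 with (encode_opt (eval_fuel s x l)); [apply H | apply eval_sg].
  - apply eval_mul.
Qed.

Lemma fuel_correct_comp f gs :
  fuel_correct f -> Forall fuel_correct gs -> fuel_correct (c_comp f gs).
Proof.
  intros Hf Hgs s l. cbn [fuel_code eval_fuel].
  set (os := map (fun g => eval_fuel s g l) gs).
  assert (Hbase : eval (c_comp (fuel_code f)
                          (c_proj 0 :: map (fun cg => c_comp code_pred [cg]) (map fuel_code gs)))
                       (s :: l) (encode_opt (eval_fuel s f (map (fun o => pred (encode_opt o)) os)))).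
  { econstructor; [|apply Hf]. constructor; [constructor|].
    unfold os. induction Hgs; simpl; constructor; auto.
    apply eval_comp1 with (encode_opt (eval_fuel s x l)); [apply H | apply eval_pred]. }
  assert (Hm := eval_mul_sg gs s l _ _ Hgs Hbase). fold os in Hm.
  destruct (all_some os) as [ys|] eqn:E.
  - destruct (all_some_Some _ _ E) as [E1 E2]. rewrite E1, E2, Nat.mul_1_l in Hm. exact Hm.
  - rewrite (all_some_None _ E) in Hm. exact Hm.
Qed.

Lemma fuel_correct_prec f g :
  fuel_correct f -> fuel_correct g -> fuel_correct (c_prec f g).
Proof.
  intros Hf Hg s l. cbn [fuel_code eval_fuel].
  set (W := max (code_width f) (code_width g - 2)).
  eapply e_comp; [repeat constructor; apply eval_proj_codes|].
  set (L := window 2 W (s :: l)).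
  assert (AL : agree W (tl l) L).
  { apply agree_sym, agree_window. intros i Hi.
    replace (i + 2) with (S (S i)) by lia. destruct l, i; reflexivity. }
  assert (AL' : forall j r, agree W (tl l) (window 3 W (j :: r :: s :: L))).
  { intros j r. apply agree_sym, agree_window. intros i Hi.
    replace (i + 3) with (S (S (S i))) by lia. symmetry. apply AL; auto. }
  assert (Hv : encode_opt (nat_rect (fun _ => option nat) (eval_fuel s f (tl l))
       (fun j r => match r with Some r => eval_fuel s g (j :: r :: tl l) | None => None end) (hd 0 l)) =
     prim_rec (encode_opt (eval_fuel s f L))
       (fun j r => sg r * encode_opt (eval_fuel s g (j :: pred r :: window 3 W (j :: r :: s :: L))))
       (hd 0 l)).
  { induction (hd 0 l); simpl.
    - f_equal. apply eval_fuel_agree. eapply agree_weaken; [|exact AL]. unfold W; lia.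
    - rewrite <- IHn. destruct (nat_rect _ _ _ n) as [r|]; simpl; [|reflexivity].
      unfold sg; simpl. rewrite Nat.add_0_r. f_equal. apply eval_fuel_agree, agree_cons2.
      eapply agree_weaken; [|apply AL']. unfold W; lia. }
  replace (nth 1 (s :: l) 0) with (hd 0 l) by (destruct l; reflexivity).
  rewrite Hv. apply eval_prec; [apply Hf|]. intros j r.
  apply eval_comp2 with (sg r)
    (encode_opt (eval_fuel s g (j :: pred r :: window 3 W (j :: r :: s :: L)))).
  - apply eval_comp1 with r; [constructor | apply eval_sg].
  - eapply e_comp; [|apply Hg]. repeat constructor.
    + apply eval_comp1 with r; [constructor | apply eval_pred].
    + apply eval_proj_codes.
  - apply eval_mul.
Qed.

Lemma fuel_correct_mu f : fuel_correct f -> fuel_correct (c_mu f).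
Proof.
  intros Hf s l. cbn [fuel_code eval_fuel]. set (W := code_width f - 1).
  replace (encode_opt (mu_result _))
    with (pred (mu_search (fun j => encode_opt (eval_fuel s f (j :: l))) s))
    by (destruct (mu_search _ s) as [|[|]]; reflexivity).
  apply eval_comp1 with (mu_search (fun j => encode_opt (eval_fuel s f (j :: l))) s); [|apply eval_pred].
  eapply e_comp; [repeat constructor; apply eval_proj_codes|].
  set (L := window 1 W (s :: l)). change (nth 0 (s :: l) 0) with s.
  assert (AL : forall j r, agree W (window 3 W (j :: r :: s :: L)) l).
  { intros j r. apply agree_window. intros i Hi.
    replace (i + 3) with (S (S (S i))) by lia. simpl.
    unfold L. rewrite nth_window by auto. rewrite Nat.add_comm. reflexivity. }
  replace (mu_search (fun j => encode_opt (eval_fuel s f (j :: l))) s) with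
    (prim_rec 0 (fun j st =>
       mu_step j st (encode_opt (eval_fuel s f (j :: window 3 W (j :: st :: s :: L))))) s).
  - apply eval_prec; [constructor|]. intros j st.
    apply eval_comp3 with j st (encode_opt (eval_fuel s f (j :: window 3 W (j :: st :: s :: L))));
      [constructor | constructor | | apply eval_mu_step].
    eapply e_comp; [|apply Hf]. repeat constructor. apply eval_proj_codes.
  - apply prim_rec_ext; auto. intros j st. do 2 f_equal.
    apply eval_fuel_agree, agree_cons, AL.
Qed.

Lemma fuel_code_correct c : fuel_correct c.
Proof.
  induction c using code_nested_ind.
  - intros s l. apply eval_comp1 with 0; [constructor | apply eval_succ].
  - intros s l. apply eval_comp1 with (S (hd 0 l)); [|apply eval_succ].
    apply eval_comp1 with (hd 0 l); [apply eval_proj; destruct l; reflexivity | apply eval_succ].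
  - intros s l. apply eval_comp1 with (nth i l 0); [apply eval_proj; reflexivity | apply eval_succ].
  - apply fuel_correct_comp; auto.
  - apply fuel_correct_prec; auto.
  - apply fuel_correct_mu; auto.
Qed.

Lemma eval_mu_total f l (F : nat -> nat) y :
  (forall y, eval f (y :: l) (F y)) -> F y = 0 ->
  exists m, eval (c_mu f) l m /\ F m = 0.
Proof.
  intros Hf Hy.
  destruct (dec_inh_nat_subset_has_unique_least_element (fun m => F m = 0))
    as [m [[Hm Hleast] _]]; [intros; destruct (Nat.eq_dec (F n) 0); auto | eauto|].
  exists m. split; auto. constructor; [rewrite <- Hm; apply Hf|].
  intros y' Hy'. exists (F y'). split; [|apply Hf].
  intros H0. specialize (Hleast y' H0). lia.
Qed.

Lemma eval_mu_zero f l (F : nat -> nat) m :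
  (forall y, eval f (y :: l) (F y)) -> eval (c_mu f) l m -> F m = 0.
Proof. intros Hf Hm. inversion Hm; subst. eapply eval_det; eauto. Qed.

Lemma eval_fuel_None c l :
  ~ (exists y, eval c l y) -> forall s, eval_fuel s c l = None.
Proof.
  intros Hc s. destruct (eval_fuel s c l) as [y|] eqn:E; auto.
  exfalso. eauto using eval_fuel_sound.
Qed.

Lemma re_ext (P Q : nat -> Prop) :
  (forall n, P n <-> Q n) -> recursively_enumerable P -> recursively_enumerable Q.
Proof. intros E [c Hc]. exists c. intros n. rewrite <- E. apply Hc. Qed.

Lemma re_preimage (P : nat -> Prop) (g : nat -> nat) G :
  recursively_enumerable P -> (forall n, eval G [n] (g n)) ->
  recursively_enumerable (fun n => P (g n)).
Proof.
  intros [c Hc] HG. exists (c_comp c [G]). intros n. rewrite Hc. split.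
  - intros [y Hy]. exists y. apply eval_comp1 with (g n); auto.
  - intros [y Hy]. exists y. inversion Hy as [| | | ? ? ? ys ? Hys Hf | | | |]; subst.
    inversion Hys as [|? a ? ? Ha Hnil]; subst. inversion Hnil; subst.
    rewrite (eval_det _ _ _ _ Ha (HG n)) in Hf. exact Hf.
Qed.

Lemma re_exists_zero f (F : nat -> nat -> nat) :
  (forall n y, eval f [y; n] (F n y)) -> recursively_enumerable (fun n => exists y, F n y = 0).
Proof.
  intros Hf. exists (c_mu f). intros n. split.
  - intros [y Hy]. destruct (eval_mu_total f [n] (F n) y) as [m [Hm _]]; eauto.
  - intros [m Hm]. exists m. eapply eval_mu_zero; eauto.
Qed.

(* Post: search for a fuel at which one of the two semi-deciders halts. *)
Theorem recursive_of_re_complement (P : nat -> Prop) :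
  recursively_enumerable P -> recursively_enumerable (fun n => ~ P n) -> recursive P.
Proof.
  intros [c1 H1] [c2 H2].
  set (body := c_comp code_mul [c_comp code_is_zero [fuel_code c1]; c_comp code_is_zero [fuel_code c2]]).
  exists (c_comp code_sg [c_comp (fuel_code c1) [c_mu body; c_proj 0]]). intros n.
  set (F := fun s => (1 - encode_opt (eval_fuel s c1 [n])) * (1 - encode_opt (eval_fuel s c2 [n]))).
  assert (Hbody : forall s, eval body [s; n] (F s)).
  { intros s. apply eval_comp2 with (1 - encode_opt (eval_fuel s c1 [n]))
                                    (1 - encode_opt (eval_fuel s c2 [n])); [| |apply eval_mul].
    - apply eval_comp1 with (encode_opt (eval_fuel s c1 [n]));
        [apply fuel_code_correct | apply eval_is_zero].
    - apply eval_comp1 with (encode_opt (eval_fuel s c2 [n]));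
        [apply fuel_code_correct | apply eval_is_zero]. }
  assert (Hhalt : exists s, F s = 0).
  { destruct (classic (P n)) as [Hn|Hn]; [apply H1 in Hn | apply H2 in Hn];
      destruct Hn as [y Hy]; destruct (eval_fuel_complete _ _ _ Hy) as [s Hs];
      exists s; unfold F; rewrite Hs by lia; simpl; lia. }
  destruct Hhalt as [s Hs].
  destruct (eval_mu_total body [n] F s Hbody Hs) as [m [Hm HFm]].
  assert (Hout : eval (c_comp code_sg [c_comp (fuel_code c1) [c_mu body; c_proj 0]]) [n]
                      (sg (encode_opt (eval_fuel m c1 [n])))).
  { apply eval_comp1 with (encode_opt (eval_fuel m c1 [n])); [|apply eval_sg].
    apply eval_comp2 with m n; [exact Hm | constructor | apply fuel_code_correct]. }
  split; intros Hn.
  - assert (Hc2 := eval_fuel_None c2 [n] (fun H => proj2 (H2 n) H Hn) m).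
    unfold F in HFm. rewrite Hc2 in HFm.
    destruct (eval_fuel m c1 [n]); simpl in *; [exact Hout | lia].
  - rewrite (eval_fuel_None c1 [n] (fun H => Hn (proj2 (H1 n) H)) m) in Hout. exact Hout.
Qed.

(** * The Goedel numbering is primitive recursive *)

Definition app1 f a := App f (ECons a ENil).
Definition app2 f a b := App f (ECons a (ECons b ENil)).
Definition app3 f a b c := App f (ECons a (ECons b (ECons c ENil))).
Definition le_e a b := is_zero (Sub a b).
Definition lt_e a b := sgn (Sub b a).
Definition dist_e a b := Add (Sub a b) (Sub b a).

Definition tri (d : nat) : nat := prim_rec 0 (fun j r => S j + r) d.
Definition tri_e := Rec (Var 0) Zro (Add (Suc (Var 0)) (Var 1)).

Lemma tri_S d : tri (S d) = S d + tri d.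
Proof. reflexivity. Qed.

Lemma tri_le_mono a b : a <= b -> tri a <= tri b.
Proof. induction 1; auto. rewrite tri_S. lia. Qed.

Lemma le_tri d : d <= tri d.
Proof. induction d; auto. rewrite tri_S. lia. Qed.

Definition pair_e := Add (Var 1) (app1 tri_e (Add (Var 1) (Var 0))).

Lemma val_pair_e x y : expr_val pair_e [x; y] = to_nat (x, y).
Proof. reflexivity. Qed.

(* The diagonal of [n] is the number of [j <= n] with [tri (S j) <= n]. *)
Definition cantor_diag (n : nat) : nat :=
  prim_rec 0 (fun j r => r + (1 - (tri (S j) - n))) (S n).
Definition diag_e := Rec (Suc (Var 0)) Zro (Add (Var 1) (le_e (app1 tri_e (Suc (Var 0))) (Var 2))).

Definition cantor_snd (n : nat) := n - tri (cantor_diag n).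
Definition cantor_fst (n : nat) := cantor_diag n - cantor_snd n.
Definition snd_e := Sub (Var 0) (app1 tri_e (app1 diag_e (Var 0))).
Definition fst_e := Sub (app1 diag_e (Var 0)) (app1 snd_e (Var 0)).

Lemma val_snd_e n : expr_val snd_e [n] = cantor_snd n.
Proof. reflexivity. Qed.

Lemma val_fst_e n : expr_val fst_e [n] = cantor_fst n.
Proof. reflexivity. Qed.

Lemma count_lt d m : prim_rec 0 (fun j r => r + (if j <? d then 1 else 0)) m = min m d.
Proof.
  induction m; [reflexivity|]. cbn [nat_rect]. rewrite IHm.
  destruct (m <? d) eqn:E; [apply Nat.ltb_lt in E | apply Nat.ltb_ge in E]; lia.
Qed.

Lemma cantor_proj_to_nat x y :
  cantor_fst (to_nat (x, y)) = x /\ cantor_snd (to_nat (x, y)) = y.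
Proof.
  set (n := to_nat (x, y)). set (d := y + x).
  assert (En : n = y + tri d) by reflexivity.
  assert (Hdiag : cantor_diag n = min (S n) d).
  { unfold cantor_diag. rewrite <- (count_lt d (S n)).
    apply prim_rec_ext; auto. intros j r. f_equal.
    destruct (j <? d) eqn:E; [apply Nat.ltb_lt in E | apply Nat.ltb_ge in E].
    - assert (tri (S j) <= tri d) by (apply tri_le_mono; lia). lia.
    - assert (HH : tri (S d) <= tri (S j)) by (apply tri_le_mono; lia). rewrite tri_S in HH. lia. }
  assert (d <= n) by (pose proof (le_tri d); lia).
  rewrite Nat.min_r in Hdiag by lia.
  unfold cantor_fst, cantor_snd. rewrite Hdiag. split; lia.
Qed.

Lemma cantor_fst_to_nat x y : cantor_fst (to_nat (x, y)) = x.
Proof. apply cantor_proj_to_nat. Qed.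

Lemma cantor_snd_to_nat x y : cantor_snd (to_nat (x, y)) = y.
Proof. apply cantor_proj_to_nat. Qed.

Lemma of_nat_cantor n : of_nat n = (cantor_fst n, cantor_snd n).
Proof.
  rewrite <- (cancel_to_of n). destruct (of_nat n) as [x y].
  rewrite cancel_of_to, cantor_fst_to_nat, cantor_snd_to_nat. reflexivity.
Qed.

Definition iter_snd (i r : nat) := prim_rec r (fun _ acc => cantor_snd acc) i.
Definition iter_snd_e := Rec (Var 0) (Var 1) (app1 snd_e (Var 1)).

Lemma iter_snd_S i r : iter_snd (S i) r = iter_snd i (cantor_snd r).
Proof.
  induction i; [reflexivity|]. unfold iter_snd in *. simpl in *. rewrite IHi. reflexivity.
Qed.

Definition decode_nth (c i : nat) := sg (cantor_fst c - i) * cantor_fst (iter_snd i (cantor_snd c)).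
Definition decode_nth_e :=
  Mul (lt_e (Var 1) (app1 fst_e (Var 0)))
      (app1 fst_e (app2 iter_snd_e (Var 1) (app1 snd_e (Var 0)))).

Lemma val_decode_nth_e c i : expr_val decode_nth_e [c; i] = decode_nth c i.
Proof. reflexivity. Qed.

Lemma nth_decode_list_aux len r i :
  nth i (decode_list_aux len r) 0 = if i <? len then cantor_fst (iter_snd i r) else 0.
Proof.
  revert r i. induction len; intros r i; simpl.
  - destruct i; reflexivity.
  - rewrite of_nat_cantor. destruct i; simpl; auto.
    rewrite IHlen, <- iter_snd_S. reflexivity.
Qed.

Lemma length_decode_list_aux len r : length (decode_list_aux len r) = len.
Proof. revert r. induction len; intros r; simpl; auto. rewrite of_nat_cantor. simpl. auto. Qed.

Lemma decode_list_cantor c : decode_list c = decode_list_aux (cantor_fst c) (cantor_snd c).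
Proof. unfold decode_list. rewrite of_nat_cantor. reflexivity. Qed.

Lemma length_decode_list c : length (decode_list c) = cantor_fst c.
Proof. rewrite decode_list_cantor. apply length_decode_list_aux. Qed.

Lemma decode_nth_spec c i : decode_nth c i = nth i (decode_list c) 0.
Proof.
  rewrite decode_list_cantor, nth_decode_list_aux. unfold decode_nth, sg.
  destruct (i <? cantor_fst c) eqn:E; [apply Nat.ltb_lt in E | apply Nat.ltb_ge in E].
  - replace (1 - (1 - (cantor_fst c - i))) with 1 by lia. lia.
  - replace (cantor_fst c - i) with 0 by lia. reflexivity.
Qed.

Fixpoint encode_list_aux (x : list nat) : nat :=
  match x with [] => 0 | a :: x' => to_nat (a, encode_list_aux x') end.

Lemma decode_list_surj x : exists k, decode_list k = x.
Proof.
  exists (to_nat (length x, encode_list_aux x)). unfold decode_list. rewrite cancel_of_to.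
  induction x; [reflexivity|]. cbn [length encode_list_aux decode_list_aux].
  rewrite cancel_of_to, IHx. reflexivity.
Qed.

Lemma decode_mono_cantor mc : decode_mono mc = (decode_Z (cantor_fst mc), decode_list (cantor_snd mc)).
Proof. unfold decode_mono. rewrite of_nat_cantor. reflexivity. Qed.

Lemma decode_Z_cantor a :
  decode_Z a = if cantor_fst a =? 0 then Z.of_nat (cantor_snd a) else (- Z.of_nat (cantor_snd a))%Z.
Proof. unfold decode_Z. rewrite of_nat_cantor. destruct (cantor_fst a); reflexivity. Qed.

Lemma decode_eq_cantor n :
  decode_eq n = mkDioph (cantor_fst n) (map decode_mono (decode_list (cantor_snd n))).
Proof. unfold decode_eq. rewrite of_nat_cantor. reflexivity. Qed.

(** * Checking a candidate solution is primitive recursive *)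

Definition pow_iter (a b : nat) := prim_rec 1 (fun _ r => r * a) b.
Definition pow_e := Rec (Var 1) one (Mul (Var 1) (Var 2)).

Lemma pow_iter_pow a b : pow_iter a b = a ^ b.
Proof. induction b; simpl; auto. unfold pow_iter in *. simpl. rewrite IHb. lia. Qed.

Definition mono_nat (mc k : nat) :=
  prim_rec 1 (fun j r => r * pow_iter (decode_nth k j) (decode_nth (cantor_snd mc) j)) (cantor_fst k).
Definition mono_e :=
  Rec (app1 fst_e (Var 1)) one
      (Mul (Var 1) (app2 pow_e (app2 decode_nth_e (Var 3) (Var 0))
                               (app2 decode_nth_e (app1 snd_e (Var 2)) (Var 0)))).

Lemma val_mono_e mc k : expr_val mono_e [mc; k] = mono_nat mc k.
Proof.
  cbn [expr_val exprs_val mono_e app1 app2 nth]. rewrite val_fst_e.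
  apply prim_rec_ext; [reflexivity|]. intros j r. reflexivity.
Qed.

Lemma prim_rec_prod_shift (g : nat -> nat) m :
  prim_rec 1 (fun j r => r * g j) (S m) = g 0 * prim_rec 1 (fun j r => r * g (S j)) m.
Proof. induction m; simpl in *; [lia|]. rewrite IHm. lia. Qed.

Lemma prim_rec_sum_shift (g : nat -> nat) m :
  prim_rec 0 (fun j r => r + g j) (S m) = g 0 + prim_rec 0 (fun j r => r + g (S j)) m.
Proof. induction m; simpl in *; [lia|]. rewrite IHm. lia. Qed.

Lemma mono_val_prod x e :
  mono_val e x = Z.of_nat (prim_rec 1 (fun j r => r * (nth j x 0 ^ nth j e 0)) (length x)).
Proof.
  revert e. induction x as [|a x IH]; intros e; [reflexivity|].
  cbn [mono_val length]. rewrite prim_rec_prod_shift, Nat2Z.inj_mul, Nat2Z.inj_pow, IH.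
  f_equal.
  - destruct e; reflexivity.
  - f_equal. apply prim_rec_ext; auto. intros j r. do 2 f_equal.
    destruct e; simpl; auto. destruct j; auto.
Qed.

Lemma mono_nat_spec mc k :
  Z.of_nat (mono_nat mc k) = mono_val (decode_list (cantor_snd mc)) (decode_list k).
Proof.
  rewrite mono_val_prod. f_equal. unfold mono_nat. rewrite length_decode_list.
  apply prim_rec_ext; auto. intros j r. rewrite pow_iter_pow, !decode_nth_spec. reflexivity.
Qed.

(* Codes compute on [nat], so signed terms are split into their nonnegative and negative parts. *)
Definition term_pos (k mc : nat) :=
  (1 - cantor_fst (cantor_fst mc)) * cantor_snd (cantor_fst mc) * mono_nat mc k.
Definition term_neg (k mc : nat) :=
  sg (cantor_fst (cantor_fst mc)) * cantor_snd (cantor_fst mc) * mono_nat mc k.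

Lemma term_val_split k mc :
  (fst (decode_mono mc) * mono_val (snd (decode_mono mc)) (decode_list k))%Z =
  (Z.of_nat (term_pos k mc) - Z.of_nat (term_neg k mc))%Z.
Proof.
  rewrite decode_mono_cantor. simpl. rewrite <- mono_nat_spec, decode_Z_cantor.
  unfold term_pos, term_neg, sg. destruct (cantor_fst (cantor_fst mc)); simpl; lia.
Qed.

Definition mono_code_e := app2 decode_nth_e (app1 snd_e (Var 0)) (Var 2).
Definition term_pos_e :=
  Mul (Mul (is_zero (app1 fst_e (app1 fst_e mono_code_e))) (app1 snd_e (app1 fst_e mono_code_e)))
      (app2 mono_e mono_code_e (Var 1)).
Definition term_neg_e :=
  Mul (Mul (sgn (app1 fst_e (app1 fst_e mono_code_e))) (app1 snd_e (app1 fst_e mono_code_e)))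
      (app2 mono_e mono_code_e (Var 1)).

Lemma val_term_pos_e n k j :
  expr_val term_pos_e [n; k; j] = term_pos k (decode_nth (cantor_snd n) j).
Proof.
  cbn [expr_val exprs_val term_pos_e mono_code_e app1 app2 nth].
  rewrite val_snd_e, val_decode_nth_e, !val_fst_e, val_snd_e, val_mono_e. reflexivity.
Qed.

Lemma val_term_neg_e n k j :
  expr_val term_neg_e [n; k; j] = term_neg k (decode_nth (cantor_snd n) j).
Proof.
  cbn [expr_val exprs_val term_neg_e mono_code_e app1 app2 nth].
  rewrite val_snd_e, val_decode_nth_e, !val_fst_e, val_snd_e, val_mono_e. reflexivity.
Qed.

Definition poly_pos n k :=
  prim_rec 0 (fun j r => r + term_pos k (decode_nth (cantor_snd n) j)) (cantor_fst (cantor_snd n)).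
Definition poly_neg n k :=
  prim_rec 0 (fun j r => r + term_neg k (decode_nth (cantor_snd n) j)) (cantor_fst (cantor_snd n)).
Definition poly_pos_e :=
  Rec (app1 fst_e (app1 snd_e (Var 0))) Zro (Add (Var 1) (app3 term_pos_e (Var 2) (Var 3) (Var 0))).
Definition poly_neg_e :=
  Rec (app1 fst_e (app1 snd_e (Var 0))) Zro (Add (Var 1) (app3 term_neg_e (Var 2) (Var 3) (Var 0))).

Lemma val_poly_pos_e n k : expr_val poly_pos_e [n; k] = poly_pos n k.
Proof.
  cbn [expr_val exprs_val poly_pos_e app1 app3 nth]. rewrite val_snd_e, val_fst_e.
  apply prim_rec_ext; [reflexivity|]. intros j r.
  cbn [expr_val exprs_val nth]. rewrite val_term_pos_e. reflexivity.
Qed.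

Lemma val_poly_neg_e n k : expr_val poly_neg_e [n; k] = poly_neg n k.
Proof.
  cbn [expr_val exprs_val poly_neg_e app1 app3 nth]. rewrite val_snd_e, val_fst_e.
  apply prim_rec_ext; [reflexivity|]. intros j r.
  cbn [expr_val exprs_val nth]. rewrite val_term_neg_e. reflexivity.
Qed.

Lemma fold_right_add_prim_rec (g : nat -> nat) L :
  fold_right (fun a acc => g a + acc) 0 L = prim_rec 0 (fun j r => r + g (nth j L 0)) (length L).
Proof.
  induction L; [reflexivity|]. cbn [fold_right length].
  rewrite prim_rec_sum_shift, IHL. reflexivity.
Qed.

Lemma poly_val_split n k :
  poly_val (decode_eq n) (decode_list k) = (Z.of_nat (poly_pos n k) - Z.of_nat (poly_neg n k))%Z.
Proof.
  rewrite decode_eq_cantor. unfold poly_val. simpl.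
  assert (G : forall L,
    fold_right (fun m acc => (fst m * mono_val (snd m) (decode_list k) + acc)%Z) 0%Z (map decode_mono L)
    = (Z.of_nat (fold_right (fun a acc => term_pos k a + acc)%nat 0%nat L)
       - Z.of_nat (fold_right (fun a acc => term_neg k a + acc)%nat 0%nat L))%Z).
  { induction L; simpl; auto. rewrite IHL, term_val_split. lia. }
  rewrite G, !fold_right_add_prim_rec. unfold poly_pos, poly_neg. rewrite length_decode_list.
  f_equal; f_equal; apply prim_rec_ext; auto; intros; rewrite decode_nth_spec; reflexivity.
Qed.

Definition defect n k :=
  (cantor_fst k - cantor_fst n) + (cantor_fst n - cantor_fst k)
  + ((poly_pos n k - poly_neg n k) + (poly_neg n k - poly_pos n k)).
Definition defect_e :=
  Add (dist_e (app1 fst_e (Var 1)) (app1 fst_e (Var 0)))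
      (dist_e (app2 poly_pos_e (Var 0) (Var 1)) (app2 poly_neg_e (Var 0) (Var 1))).

Lemma val_defect_e n k : expr_val defect_e [n; k] = defect n k.
Proof.
  cbn [expr_val exprs_val defect_e dist_e app1 app2 nth].
  rewrite !val_poly_pos_e, !val_poly_neg_e. reflexivity.
Qed.

Lemma defect_zero_iff n k : defect n k = 0 <-> is_solution (decode_eq n) (decode_list k).
Proof.
  unfold is_solution. rewrite poly_val_split, length_decode_list, decode_eq_cantor.
  simpl. unfold defect. lia.
Qed.

Lemma re_has_solution : recursively_enumerable (fun n => has_solution (decode_eq n)).
Proof.
  apply (re_ext (fun n => exists k, defect n k = 0)).
  - intros n. split.
    + intros [k Hk]. exists (decode_list k). apply defect_zero_iff, Hk.
    + intros [x Hx]. destruct (decode_list_surj x) as [k <-]. exists k. apply defect_zero_iff, Hx.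
  - apply (re_exists_zero (c_comp (compile defect_e) [c_proj 1; c_proj 0])).
    intros n y. apply eval_comp2 with n y; [constructor | constructor |].
    rewrite <- val_defect_e. apply compile_correct.
Qed.

(** * Adding an unused variable *)

(* [shift_mono mc] codes the monomial [mc] with an exponent [0] prepended. *)
Definition shift_mono (mc : nat) :=
  to_nat (cantor_fst mc,
          to_nat (S (cantor_fst (cantor_snd mc)), to_nat (0, cantor_snd (cantor_snd mc)))).
Definition shift_mono_e :=
  app2 pair_e (app1 fst_e (Var 0))
    (app2 pair_e (Suc (app1 fst_e (app1 snd_e (Var 0))))
                 (app2 pair_e Zro (app1 snd_e (app1 snd_e (Var 0))))).

Lemma val_shift_mono_e mc : expr_val shift_mono_e [mc] = shift_mono mc.
Proof. reflexivity. Qed.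

Lemma decode_shift_mono mc :
  decode_mono (shift_mono mc) = (fst (decode_mono mc), 0 :: snd (decode_mono mc)).
Proof.
  rewrite !decode_mono_cantor. unfold shift_mono.
  rewrite cantor_fst_to_nat, cantor_snd_to_nat. cbn [fst snd]. f_equal.
  rewrite (decode_list_cantor (cantor_snd mc)). unfold decode_list at 1.
  rewrite cancel_of_to. cbn [decode_list_aux]. rewrite cancel_of_to. reflexivity.
Qed.

(* Packs the shifted monomial codes of [n] as [decode_list_aux] reads them,
   hence from the last one backwards. *)
Definition shift_monos (n : nat) :=
  prim_rec 0
    (fun j r => to_nat (shift_mono (decode_nth (cantor_snd n) (cantor_fst (cantor_snd n) - 1 - j)), r))
    (cantor_fst (cantor_snd n)).
Definition shift_monos_e :=
  Rec (app1 fst_e (app1 snd_e (Var 0))) Zro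
    (app2 pair_e
       (app1 shift_mono_e
          (app2 decode_nth_e (app1 snd_e (Var 2))
                (Sub (Sub (app1 fst_e (app1 snd_e (Var 2))) one) (Var 0))))
       (Var 1)).

Lemma val_shift_monos_e n : expr_val shift_monos_e [n] = shift_monos n.
Proof.
  cbn [expr_val exprs_val shift_monos_e app1 app2 nth]. rewrite val_snd_e, val_fst_e.
  apply prim_rec_ext; [reflexivity|]. intros j r. cbn [expr_val exprs_val one nth].
  rewrite val_decode_nth_e, val_shift_mono_e, val_pair_e. reflexivity.
Qed.

Lemma decode_shift_monos ml M t : t <= M ->
  decode_list_aux t (prim_rec 0 (fun j r => to_nat (shift_mono (decode_nth ml (M - 1 - j)), r)) t)
  = map (fun j => shift_mono (decode_nth ml j)) (seq (M - t) t).
Proof.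
  induction t; intros Ht; [reflexivity|].
  cbn [nat_rect decode_list_aux]. rewrite cancel_of_to, IHt by lia.
  replace (M - S t) with (M - 1 - t) by lia. simpl. do 3 f_equal. lia.
Qed.

Definition add_var (n : nat) :=
  to_nat (S (cantor_fst n), to_nat (cantor_fst (cantor_snd n), shift_monos n)).
Definition add_var_e :=
  app2 pair_e (Suc (app1 fst_e (Var 0)))
       (app2 pair_e (app1 fst_e (app1 snd_e (Var 0))) (app1 shift_monos_e (Var 0))).

Lemma eval_add_var n : eval (compile add_var_e) [n] (add_var n).
Proof.
  replace (add_var n) with (expr_val add_var_e [n]).
  - apply compile_correct.
  - cbn [expr_val exprs_val add_var_e app1 app2 nth]. rewrite val_shift_monos_e. reflexivity.
Qed.

Lemma list_as_map (L : list nat) : L = map (fun j => nth j L 0) (seq 0 (length L)).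
Proof. induction L; simpl; auto. f_equal. rewrite <- seq_shift, map_map. exact IHL. Qed.

Lemma decode_add_var n : decode_eq (add_var n) =
  mkDioph (S (cantor_fst n))
          (map (fun m => (fst m, 0 :: snd m)) (map decode_mono (decode_list (cantor_snd n)))).
Proof.
  rewrite decode_eq_cantor. unfold add_var. rewrite cantor_fst_to_nat, cantor_snd_to_nat. f_equal.
  unfold decode_list at 1. rewrite cancel_of_to. unfold shift_monos.
  rewrite decode_shift_monos, Nat.sub_diag by lia.
  rewrite (list_as_map (decode_list (cantor_snd n))) at 1. rewrite length_decode_list, !map_map.
  apply map_ext. intros j. rewrite decode_shift_mono, decode_nth_spec. reflexivity.
Qed.

Lemma poly_val_shift m m' monos y x :
  poly_val (mkDioph m (map (fun mo => (fst mo, 0 :: snd mo)) monos)) (y :: x) =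
  poly_val (mkDioph m' monos) x.
Proof.
  unfold poly_val. simpl. induction monos; simpl; auto.
  rewrite IHmonos. do 2 f_equal. destruct (mono_val (snd a) x); reflexivity.
Qed.

Lemma is_solution_add_var n x : is_solution (decode_eq (add_var n)) x <->
  exists y x', x = y :: x' /\ is_solution (decode_eq n) x'.
Proof.
  rewrite decode_add_var. unfold is_solution. rewrite (decode_eq_cantor n). simpl. split.
  - intros [H1 H2]. destruct x as [|y x']; simpl in H1; [discriminate|].
    exists y, x'. split; auto. split; [lia|]. rewrite <- H2. symmetry. apply poly_val_shift.
  - intros [y [x' [-> [H1 H2]]]]. split; simpl; [lia|]. rewrite (poly_val_shift _ (cantor_fst n)). auto.
Qed.

(* A solution of [n] gives infinitely many of [add_var n]: any value of the new variable. *)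
Lemma finitely_many_add_var n :
  finitely_many_solutions (decode_eq (add_var n)) <-> ~ has_solution (decode_eq n).
Proof.
  split.
  - intros [L HL] [x Hx].
    set (y := S (list_max (map (hd 0) L))).
    assert (Hin : In (y :: x) L) by (apply HL, is_solution_add_var; eauto).
    assert (Hle : hd 0 (y :: x) <= list_max (map (hd 0) L)).
    { assert (F := proj1 (list_max_le (map (hd 0) L) _) (le_n _)).
      rewrite Forall_forall in F. apply F, in_map, Hin. }
    simpl in Hle. unfold y in Hle. lia.
  - intros Hn. exists []. intros x Hx. apply is_solution_add_var in Hx.
    destruct Hx as [y [x' [_ Hx']]]. exfalso. apply Hn. exists x'. auto.
Qed.

Theorem mainTheorem12 :
  ~ recursive (fun c => has_solution (decode_eq c)) ->
  ~ recursively_enumerable (fun c => finitely_many_solutions (decode_eq c)).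
Proof.
  intros Hnot_rec Hfin_re. apply Hnot_rec, recursive_of_re_complement.
  - exact re_has_solution.
  - apply (re_ext (fun n => finitely_many_solutions (decode_eq (add_var n)))).
    + exact finitely_many_add_var.
    + exact (re_preimage _ add_var _ Hfin_re eval_add_var).
Qed.
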